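(* Consider $M$ access points (APs), each with $N$ antennas and $L\le N$ RF chains, and $K$ single-antenna users (UEs) with transmit powers $p_1,\dots,p_K>0$ and noise power $\sigma^2>0$. For each AP $m$ let $\mathcal{U}_m\subseteq\{1,\dots,K\}$ be the set of UEs it serves, and for each UE $k$ let $\mathcal{F}_k=\{m: k\in\mathcal{U}_m\}$. Let $\boldsymbol{h}_{m,i}\in\mathbb{C}^{N}$ be (perfectly known) channel vectors and $\boldsymbol{R}_{m,i}\in\mathbb{C}^{N\times N}$ Hermitian positive semidefinite matrices. For analog beamformers $\boldsymbol{W}=(\boldsymbol{W}_1,\dots,\boldsymbol{W}_M)$ with $\boldsymbol{W}_m\in\mathbb{C}^{N\times L}$ of full column rank, define the perfect-CSI uplink MMSE SINR of UE $k$ by $$\mathrm{SINR}_k(\boldsymbol{W})=\boldsymbol{g}_k^{*}\Big(\sum_{i\neq k}\bar{\boldsymbol{g}}_{k,i}\bar{\boldsymbol{g}}_{k,i}^{*}p_i+\boldsymbol{\Sigma}_k\Big)^{-1}\boldsymbol{g}_k,$$ where $\boldsymbol{g}_{m,i}=\boldsymbol{W}_m^{*}\boldsymbol{h}_{m,i}$, $\boldsymbol{g}_k\in\mathbb{C}^{|\mathcal{F}_k|L}$ stacks $\boldsymbol{g}_{m,k}$ over $m\in\mathcal{F}_k$, $\bar{\boldsymbol{g}}_{k,i}$ stacks $\mathbb{1}[i\in\mathcal{U}_m]\,\boldsymbol{g}_{m,i}$ over $m\in\mathcal{F}_k$, and $\boldsymbol{\Sigma}_k$ is block diagonal with blocks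 $\boldsymbol{\Sigma}_{k,m}=\sum_{i\notin\mathcal{U}_m}\boldsymbol{W}_m^{*}\boldsymbol{R}_{m,i}\boldsymbol{W}_m\,p_i+\sigma^2\boldsymbol{W}_m^{*}\boldsymbol{W}_m$, $m\in\mathcal{F}_k$. Suppose $\boldsymbol{W}_m=\boldsymbol{U}_m\boldsymbol{Q}_m$ with $\boldsymbol{U}_m\in\mathbb{C}^{N\times L}$ satisfying $\boldsymbol{U}_m^{*}\boldsymbol{U}_m=\boldsymbol{I}_L$. Then, for fixed $\boldsymbol{U}_1,\dots,\boldsymbol{U}_M$, every choice of nonsingular $\boldsymbol{Q}_m\in\mathbb{C}^{L\times L}$, $m=1,\dots,M$, yields the same value of $\mathrm{SINR}_k(\boldsymbol{W})$ (namely $\mathrm{SINR}_k(\boldsymbol{U})$), so any nonsingular $\boldsymbol{Q}=\mathrm{diag}(\boldsymbol{Q}_1,\dots,\boldsymbol{Q}_M)$ provides the maximum SINR.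
   Context: Hybrid analog-digital cell-free massive MIMO uplink. The unit-modulus constraint on the analog beamformer entries is disregarded here. ''Perfect CSI'' means the channel estimates equal the true channels, so the estimation error covariance is zero; the factorization $\boldsymbol{W}=\boldsymbol{U}\boldsymbol{Q}$ (with $\boldsymbol{U}=\mathrm{diag}(\boldsymbol{U}_m)$ semi-unitary, $\boldsymbol{Q}=\mathrm{diag}(\boldsymbol{Q}_m)$) arises from an SVD of $\boldsymbol{W}$. *)

(* Complex scalars: an arbitrary numClosedFieldType C
   (e.g. algC, or R[i] for a real closed field R). *)
From HB Require Import structures.
From mathcomp Require Import all_boot all_order all_algebra.
From mathcomp Require Export sesquilinear.
Set Implicit Arguments. Unset Strict Implicit. Unset Printing Implicit Defensive.
Import Order.TTheory GRing.Theory Num.Theory.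
Local Open Scope ring_scope.
Local Open Scope sesquilinear_scope.

Section HybridCF.
Variable C : numClosedFieldType.

Definition ctr m n (A : 'M[C]_(m, n)) : 'M[C]_(n, m) := A ^t*.

Definition herm_psd n (A : 'M[C]_n) : Prop :=
  ctr A = A /\ forall x : 'cV[C]_n, 0 <= (ctr x *m A *m x) 0 0.

Variables (M K N L : nat).
Variable Us : 'I_M -> {set 'I_K}.
Variable h : 'I_M -> 'I_K -> 'cV[C]_N.
Variable Rc : 'I_M -> 'I_K -> 'M[C]_N.
Variable p : 'I_K -> C.
Variable sigma2 : C.

Definition Fset (k : 'I_K) : {set 'I_M} := [set m | k \in Us m].

Definition gmi (W : 'I_M -> 'M[C]_(N, L)) (m : 'I_M) (i : 'I_K) : 'cV[C]_L :=
  ctr (W m) *m h m i.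

Definition Fidx (k : 'I_K) (j : 'I_#|Fset k|) : 'I_M := enum_val j.

Definition dimF (k : 'I_K) := (\sum_(j < #|Fset k|) L)%N.

Definition gk W (k : 'I_K) : 'cV[C]_(dimF k) :=
  \mxcol_(j < #|Fset k|) gmi W (Fidx j) k.

Definition gbar W (k i : 'I_K) : 'cV[C]_(dimF k) :=
  \mxcol_(j < #|Fset k|) ((i \in Us (Fidx j))%:R *: gmi W (Fidx j) i).

Definition Sigma_blk (W : 'I_M -> 'M[C]_(N, L)) (m : 'I_M) : 'M[C]_L :=
  \sum_(i < K | i \notin Us m) p i *: (ctr (W m) *m Rc m i *m W m) +
  sigma2 *: (ctr (W m) *m W m).

Definition Sigma_k W (k : 'I_K) : 'M[C]_(dimF k) :=
  \mxdiag_(j < #|Fset k|) Sigma_blk W (Fidx j).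

Definition SINR W (k : 'I_K) : C :=
  (ctr (gk W k) *m
     invmx (\sum_(i < K | i != k) p i *: (gbar W k i *m ctr (gbar W k i))
            + Sigma_k W k)
   *m gk W k) 0 0.

End HybridCF.

From HB Require Import structures.
From mathcomp Require Import all_boot all_order all_algebra.
Import Order.TTheory GRing.Theory Num.Theory.
Local Open Scope ring_scope.
Set Implicit Arguments. Unset Strict Implicit. Unset Printing Implicit Defensive.

(* Let D_k be the block-diagonal matrix diag(Q_m, m in F_k).  Replacing W_m by
   U_m Q_m turns g_k and every gbar_{k,i} into D_k^* g_k and D_k^* gbar_{k,i},
   and Sigma_k into D_k^* Sigma_k D_k, so the interference-plus-noise matrix A_k
   becomes D_k^* A_k D_k and the quadratic form g_k^* A_k^-1 g_k is unchanged.
   This needs A_k to be invertible for W = U (invmx is junk on singular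
   matrices): as U_m^* U_m = I, A_k is positive semidefinite plus sigma^2 I. *)

Section BlockDiagonal.
Variables (R : pzSemiRingType) (n : nat) (n_ : 'I_n -> nat).

Lemma mxdiagM (A_ B_ : forall i, 'M[R]_(n_ i)) :
  \mxdiag_i A_ i *m \mxdiag_i B_ i = \mxdiag_i (A_ i *m B_ i).
Proof.
rewrite {2}/mxdiag mul_mxdiag_mxblock; apply/eq_mxblock => i j.
by case: eqP => [<-|_]; rewrite ?conform_mx_id ?mulmx0.
Qed.

End BlockDiagonal.

Lemma mxdiag_unitmx (R : comUnitRingType) n (n_ : 'I_n -> nat)
    (B_ : forall i, 'M[R]_(n_ i)) :
  (forall i, B_ i \in unitmx) -> \mxdiag_i B_ i \in unitmx.
Proof.
move=> B_unit.
suff /mulmx1_unit[] : \mxdiag_i B_ i *m \mxdiag_i invmx (B_ i) = 1%:M by [].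
by rewrite mxdiagM -(mxdiagZ 1); apply: eq_mxdiag => i; rewrite mulmxV.
Qed.

Section ConjugateTranspose.
Variable C : numClosedFieldType.

Lemma ctrM m n r (A : 'M[C]_(m, n)) (B : 'M_(n, r)) :
  ctr (A *m B) = ctr B *m ctr A.
Proof. by rewrite /ctr trmx_mul map_mxM. Qed.

Lemma ctrK m n (A : 'M[C]_(m, n)) : ctr (ctr A) = A.
Proof. exact: trmxCK. Qed.

Lemma unitmx_ctr n (A : 'M[C]_n) : (ctr A \in unitmx) = (A \in unitmx).
Proof. by rewrite /ctr !unitmxE det_map_mx det_tr !unitfE conjC_eq0. Qed.

Lemma ctr_mxcol k (k_ : 'I_k -> nat) n (B_ : forall i, 'M[C]_(k_ i, n)) :
  ctr (\mxcol_i B_ i) = \mxrow_i ctr (B_ i).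
Proof. by apply/matrixP => i j; rewrite !mxE. Qed.

Lemma ctr_mxblock k l (k_ : 'I_k -> nat) (l_ : 'I_l -> nat)
    (B_ : forall i j, 'M[C]_(k_ i, l_ j)) :
  ctr (\mxblock_(i, j) B_ i j) = \mxblock_(i, j) ctr (B_ j i).
Proof. by apply/matrixP => i j; rewrite !mxE. Qed.

Lemma ctr_mxdiag k (k_ : 'I_k -> nat) (B_ : forall i, 'M[C]_(k_ i)) :
  ctr (\mxdiag_i B_ i) = \mxdiag_i ctr (B_ i).
Proof.
rewrite /mxdiag ctr_mxblock; apply/eq_mxblock => i j.
case: (eqVneq j i) => [->|_]; first by rewrite !conform_mx_id.
by apply/matrixP => a b; rewrite !mxE conjC0.
Qed.

Lemma invmx_congr n (D A : 'M[C]_n) : D \in unitmx -> A \in unitmx ->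
  D *m invmx (ctr D *m A *m D) *m ctr D = invmx A.
Proof.
move=> D_unit A_unit; have Dc_unit : ctr D \in unitmx by rewrite unitmx_ctr.
have X_unit : ctr D *m A *m D \in unitmx by rewrite !unitmx_mul Dc_unit A_unit.
have -> : invmx (ctr D *m A *m D) = invmx D *m invmx A *m invmx (ctr D).
  rewrite -[RHS](mulKmx X_unit) -!mulmxA (mulmxA D) (mulmxV D_unit) mul1mx.
  by rewrite (mulmxA A) (mulmxV A_unit) mul1mx (mulmxV Dc_unit) mulmx1.
by rewrite !mulmxA (mulmxV D_unit) mul1mx mulmxKV.
Qed.

Lemma quadform_invmx_congr n m (D A : 'M[C]_n) (g : 'M_(n, m)) :
    D \in unitmx -> A \in unitmx ->
  ctr (ctr D *m g) *m invmx (ctr D *m A *m D) *m (ctr D *m g)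
  = ctr g *m invmx A *m g.
Proof.
move=> D_unit A_unit.
by rewrite ctrM ctrK !mulmxA -2!(mulmxA (ctr g)) invmx_congr.
Qed.

Definition psdmx n (A : 'M[C]_n) := forall x : 'cV_n, 0 <= (ctr x *m A *m x) 0 0.

Lemma ctr_mulmx_ge0 n (x : 'cV[C]_n) : 0 <= (ctr x *m x) 0 0.
Proof. by rewrite mxE sumr_ge0 // => i _; rewrite !mxE mulrC mul_conjC_ge0. Qed.

Lemma ctr_mulmx_eq0 n (x : 'cV[C]_n) : ((ctr x *m x) 0 0 == 0) = (x == 0).
Proof.
apply/idP/eqP => [|->]; last by rewrite mulmx0 mxE.
rewrite mxE psumr_eq0 => [/allP x0|i _]; last by rewrite !mxE mulrC mul_conjC_ge0.
apply/matrixP => i j; rewrite ord1 mxE.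
by have /= := x0 i (mem_index_enum i); rewrite !mxE mulrC mul_conjC_eq0 => /eqP.
Qed.

Lemma psdmxD n (A B : 'M[C]_n) : psdmx A -> psdmx B -> psdmx (A + B).
Proof. by move=> A_psd B_psd x; rewrite mulmxDr mulmxDl mxE addr_ge0. Qed.

Lemma psdmx_sum n (I : finType) (P : pred I) (F : I -> 'M[C]_n) :
  (forall i, P i -> psdmx (F i)) -> psdmx (\sum_(i | P i) F i).
Proof.
apply: (big_ind (@psdmx n)) => [x|]; last exact: psdmxD.
by rewrite mulmx0 mul0mx mxE.
Qed.

Lemma psdmxZ n a (A : 'M[C]_n) : 0 <= a -> psdmx A -> psdmx (a *: A).
Proof. by move=> a_ge0 A_psd x; rewrite -scalemxAr -scalemxAl mxE mulr_ge0. Qed.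

Lemma psdmx_outer n (g : 'cV[C]_n) : psdmx (g *m ctr g).
Proof.
move=> x; rewrite mulmxA -mulmxA -[ctr g *m x]ctrK ctrM ctrK.
set y := ctr x *m g.
by rewrite mxE big_ord1 !mxE mul_conjC_ge0.
Qed.

Lemma psdmx_congr n r (B : 'M[C]_(n, r)) (A : 'M_n) :
  psdmx A -> psdmx (ctr B *m A *m B).
Proof. by move=> A_psd x; rewrite !mulmxA -ctrM -!mulmxA mulmxA. Qed.

Lemma psdmx_mxdiag k (k_ : 'I_k -> nat) (B_ : forall i, 'M[C]_(k_ i)) :
  (forall i, psdmx (B_ i)) -> psdmx (\mxdiag_i B_ i).
Proof.
move=> B_psd x; rewrite -(submxcolK x) ctr_mxcol mul_mxrow_mxdiag.
by rewrite mul_mxrow_mxcol summxE sumr_ge0 // => i _; apply: B_psd.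
Qed.

Lemma psdmx_add_scalar_unitmx n (P : 'M[C]_n) s :
  psdmx P -> 0 < s -> P + s%:M \in unitmx.
Proof.
move=> P_psd s_gt0; rewrite -unitmx_tr unitmxE unitfE.
apply/negP => /det0P[v v_neq0 vA0]; set x := v^T.
have : (ctr x *m ((P + s%:M) *m x)) 0 0 = 0.
  by rewrite -[_ *m x]trmxK trmx_mul trmxK vA0 trmx0 mulmx0 mxE.
rewrite mulmxDl mulmxDr mul_scalar_mx -scalemxAr mxE [X in _ + X]mxE mulmxA.
move/eqP; rewrite paddr_eq0 ?P_psd ?mulr_ge0 ?ctr_mulmx_ge0 ?ltW // => /andP[_].
by rewrite mulf_eq0 gt_eqF //= ctr_mulmx_eq0 trmx_eq0 (negPf v_neq0).
Qed.

End ConjugateTranspose.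

Section AnalogBeamformerScaling.
Variables (C : numClosedFieldType) (M K N L : nat).
Variables (Us : 'I_M -> {set 'I_K}) (h : 'I_M -> 'I_K -> 'cV[C]_N).
Variables (Rc : 'I_M -> 'I_K -> 'M[C]_N) (p : 'I_K -> C) (sigma2 : C).

Definition interference_noise_mx (W : 'I_M -> 'M[C]_(N, L)) (k : 'I_K) :
    'M_(dimF L Us k) :=
  \sum_(i < K | i != k) p i *: (gbar Us h W k i *m ctr (gbar Us h W k i))
  + Sigma_k Us Rc p sigma2 W k.

Lemma SINRE W k :
  SINR Us h Rc p sigma2 W k
  = (ctr (gk Us h W k) *m invmx (interference_noise_mx W k) *m gk Us h W k) 0 0.
Proof. by []. Qed.

Definition diagF (Q : 'I_M -> 'M[C]_L) (k : 'I_K) : 'M_(dimF L Us k) :=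
  \mxdiag_(j < #|Fset Us k|) Q (Fidx j).

Variables (W : 'I_M -> 'M[C]_(N, L)) (Q : 'I_M -> 'M[C]_L).
Let WQ m := W m *m Q m.

Lemma gmi_mulmx m i : gmi h WQ m i = ctr (Q m) *m gmi h W m i.
Proof. by rewrite /gmi /WQ ctrM mulmxA. Qed.

Lemma gk_mulmx k : gk Us h WQ k = ctr (diagF Q k) *m gk Us h W k.
Proof.
rewrite /gk ctr_mxdiag mul_mxdiag_mxcol; apply: eq_mxcol => j.
exact: gmi_mulmx.
Qed.

Lemma gbar_mulmx k i : gbar Us h WQ k i = ctr (diagF Q k) *m gbar Us h W k i.
Proof.
rewrite /gbar ctr_mxdiag mul_mxdiag_mxcol; apply: eq_mxcol => j.
by rewrite gmi_mulmx scalemxAr.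
Qed.

Lemma Sigma_blk_mulmx m :
  Sigma_blk Us Rc p sigma2 WQ m
  = ctr (Q m) *m Sigma_blk Us Rc p sigma2 W m *m Q m.
Proof.
rewrite /Sigma_blk /WQ mulmxDr mulmxDl mulmx_sumr mulmx_suml ctrM.
congr (_ + _); last by rewrite -scalemxAr -scalemxAl !mulmxA.
by apply: eq_bigr => i _; rewrite -scalemxAr -scalemxAl !mulmxA.
Qed.

Lemma Sigma_k_mulmx k :
  Sigma_k Us Rc p sigma2 WQ k
  = ctr (diagF Q k) *m Sigma_k Us Rc p sigma2 W k *m diagF Q k.
Proof.
rewrite /Sigma_k ctr_mxdiag !mxdiagM; apply: eq_mxdiag => j.
exact: Sigma_blk_mulmx.
Qed.

Lemma interference_noise_mx_mulmx k :
  interference_noise_mx WQ k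
  = ctr (diagF Q k) *m interference_noise_mx W k *m diagF Q k.
Proof.
rewrite /interference_noise_mx Sigma_k_mulmx mulmxDr mulmxDl.
rewrite mulmx_sumr mulmx_suml; congr (_ + _); apply: eq_bigr => i _.
by rewrite gbar_mulmx ctrM ctrK -scalemxAr -scalemxAl !mulmxA.
Qed.

Lemma SINR_mulmx k :
    (forall m, Q m \in unitmx) -> interference_noise_mx W k \in unitmx ->
  SINR Us h Rc p sigma2 WQ k = SINR Us h Rc p sigma2 W k.
Proof.
move=> Q_unit A_unit.
rewrite !SINRE gk_mulmx interference_noise_mx_mulmx quadform_invmx_congr //.
exact: mxdiag_unitmx.
Qed.

Lemma interference_noise_mx_unitmx (U : 'I_M -> 'M[C]_(N, L)) k :
    (forall i, 0 <= p i) -> 0 < sigma2 -> (forall m i, psdmx (Rc m i)) ->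
    (forall m, ctr (U m) *m U m = 1%:M) ->
  interference_noise_mx U k \in unitmx.
Proof.
move=> p_ge0 sigma2_gt0 Rc_psd U_semiunitary.
rewrite /interference_noise_mx /Sigma_k /Sigma_blk mxdiagD.
under [X in _ + (_ + X)]eq_mxdiag => j do rewrite U_semiunitary scalemx1.
rewrite mxdiagZ addrA; apply: psdmx_add_scalar_unitmx => //; apply: psdmxD.
  by apply: psdmx_sum => i _; apply/psdmxZ/psdmx_outer.
by apply: psdmx_mxdiag => j; apply: psdmx_sum => i _; apply/psdmxZ/psdmx_congr.
Qed.

End AnalogBeamformerScaling.

Theorem proposition1 (C : numClosedFieldType) (M K N L : nat)
  (Us : 'I_M -> {set 'I_K})
  (h : 'I_M -> 'I_K -> 'cV[C]_N) (Rc : 'I_M -> 'I_K -> 'M[C]_N)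
  (p : 'I_K -> C) (sigma2 : C)
  (hLN : (L <= N)%N)
  (hp : forall i, 0 < p i) (hs : 0 < sigma2)
  (hR : forall m i, herm_psd (Rc m i))
  (U : 'I_M -> 'M[C]_(N, L))
  (hU : forall m, ctr (U m) *m U m = 1%:M)
  (Q : 'I_M -> 'M[C]_L)
  (hQ : forall m, Q m \in unitmx) :
  let W := fun m => U m *m Q m in
  forall k : 'I_K,
     SINR Us h Rc p sigma2 W k = SINR Us h Rc p sigma2 U k.
Proof.
move=> W k; apply: SINR_mulmx => //.
apply: interference_noise_mx_unitmx => // [i|m i]; first exact: ltW.
by case: (hR m i).
Qed.
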